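(* Let $d\ge1$, $r\ge3$ and $n=dr\ge2$. If $r\ge 2^9$, then $$2^{n-2}r^2(2d+5)\Big(1-\frac{20\log_2^2 r}{2n+5r}\Big)\le \mathrm{td}(Q_n(d,r))\le 2^{n-2}r^2(2d+5)\Big(1-\frac{8(r-1)}{2nr+5r^2}\Big);$$ and if $3\le r<2^9$, then $$2^{n-2}(2nr+r^2)\le \mathrm{td}(Q_n(d,r))\le 2^{n-2}(2nr+5r^2-8r+8).$$
   Context: $\mathbb{Z}_2^n=\{0,1\}^n$ with coordinatewise addition mod 2; $e_i$ is the $i$-th standard basis vector, subscripts read modulo $n$. The recursive cube of rings $Q_n(d,r)$ (for $n\ge d$, $dr\equiv0\pmod n$) is the simple graph on $\mathbb{Z}_2^n\times\mathbb{Z}_r$ in which $(a,x)$ is adjacent to $(a+e_{i+dx},x)$ for $1\le i\le d$ and to $(a,x\pm1)$; it is vertex-transitive. For a vertex-transitive graph $X$, the total distance $\mathrm{td}(X)=\sum_{v\in V(X)}\mathrm{dist}(u,v)$ for any fixed vertex $u$ (here one may take $u=(0_n,0)$). $\log_2^2 r=(\log_2 r)^2$. *)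

From mathcomp Require Import all_boot.
Set Implicit Arguments. Unset Strict Implicit. Unset Printing Implicit Defensive.

Section RCR.
Variables n d r : nat.

(* Vertex set Z_2^n x Z_r.  Coordinate j : 'I_n stands for the basis
   vector e_j, indices read modulo n (so e_n is coordinate 0). *)
Definition RCRvert : finType := ({ffun 'I_n -> bool} * 'I_r)%type.

Definition flipbit (a : {ffun 'I_n -> bool}) (k : nat) : {ffun 'I_n -> bool} :=
  [ffun j : 'I_n => a j (+) (val j == k %% n)].

Definition RCRadj (u v : RCRvert) : bool :=
  ((v.1 == u.1) &&
     ((val v.2 == (val u.2 + 1) %% r) || (val u.2 == (val v.2 + 1) %% r)))
  || ((v.2 == u.2) &&
      [exists i : 'I_d, v.1 == flipbit u.1 (i.+1 + d * val u.2)]).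

Fixpoint RCRball (u : RCRvert) (k : nat) : {set RCRvert} :=
  match k with
  | 0 => [set u]
  | k'.+1 => RCRball u k' :|: [set v | [exists w in RCRball u k', RCRadj w v]]
  end.

(* graph distance: least k with v in the ball of radius k around u
   (a shortest path has fewer than #|V| edges) *)
Definition RCRdist (u v : RCRvert) : nat :=
  find (fun k => v \in RCRball u k) (iota 0 #|RCRvert|).

Definition RCRtd : nat :=
  \sum_(u : RCRvert | (u.1 == [ffun => false]) && (val u.2 == 0))
     \sum_(v : RCRvert) RCRdist u v.

End RCR.

(* A vertex (a, x) is reached from the root (0, 0) by walking around the ring
   Z_r and flipping each 1-bit of a while standing at the ring position that
   owns its block.  So the distance to (a, x) is |a| plus the length of the
   shortest ring walk from 0 to x that visits every position whose block meets
   a; such a walk explores an arc [-p, q] and has length 2 (p + q) - m, where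
   m is its final, never retraced leg.  Visiting the whole ring bounds the
   distance by |a| + r - 2 + min(x, r - x) (by |a| + r when x = 0).  Below, it
   is at least |a| + min(x, r - x), plus 2 when x = 0 and block 1 meets a (which
   makes up for the rounding of min(x, r - x) when r is odd).  Summing over all
   vertices, with average weight n / 2, gives the bounds for small r.  For
   large r a walk beats the whole-ring walk by more than 2k only if a has k + 1
   consecutive empty blocks; for k = 2 (floor(log2 r) + 1) at most 2^n / (2 r)
   words do, which yields the sharper lower bound. *)

From mathcomp Require Import all_boot.
From mathcomp Require Import zify.
Set Implicit Arguments. Unset Strict Implicit. Unset Printing Implicit Defensive.

Lemma modn_inj_pos n u v : 0 < u <= n -> 0 < v <= n -> u %% n = v %% n -> u = v.
Proof.
have modE w : 0 < w <= n -> w %% n = (w < n) * w.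
  case/andP=> w0; rewrite leq_eqVlt => /predU1P[->|wn]; first by rewrite modnn ltnn.
  by rewrite modn_small ?wn ?mul1n.
by move=> /[dup] /modE -> /andP[? ?] /[dup] /modE -> /andP[? ?]; case: ltnP; case: ltnP; lia.
Qed.

Lemma modn_pred_eq r m x : 0 < m -> x < r -> m %% r = x.+1 %% r -> m.-1 %% r = x.
Proof.
move=> m_gt0 xr mx; rewrite -(modn_small xr); apply/eqP.
by rewrite -(eqn_modDr 1) !addn1 prednK // mx.
Qed.

Lemma modn_eq_cases r m x : m %% r = x -> m = x \/ r + x <= m.
Proof.
move=> mx; have := divn_eq m r; rewrite mx.
by case: (m %/ r) => [|t]; [rewrite mul0n add0n; left | rewrite mulSn => ->; right; lia].
Qed.

Lemma modn_eq0_cases r m : m %% r = 0 -> m = 0 \/ m = r \/ 2 * r <= m.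
Proof.
move=> m0; have := divn_eq m r; rewrite m0 addn0.
case: (m %/ r) => [|[|t]]; first by rewrite mul0n; left.
  by rewrite mul1n; right; left.
by rewrite !mulSn => ->; right; right; lia.
Qed.

Definition ring_dist_sum k := \sum_(0 <= x < k) minn x (k - x).

Lemma ring_dist_sumSS k : ring_dist_sum k.+2 = ring_dist_sum k + k.+1.
Proof.
rewrite /ring_dist_sum big_nat_recl // min0n add0n.
rewrite (eq_big_nat _ _ (F2 := fun x => minn x (k - x) + 1)); last first.
  by move=> x /andP[_ xk]; rewrite subSS; lia.
rewrite big_split /= sum_nat_const_nat subn0 muln1 big_nat_recr //= subnn minn0.
by rewrite addn0.
Qed.

Lemma ring_dist_sum_bounds k :
  4 * ring_dist_sum k <= k * k <= 4 * ring_dist_sum k + 1.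
Proof.
elim/ltn_ind: k => -[|[|k]] IH; first by rewrite /ring_dist_sum big_geq.
  by rewrite /ring_dist_sum big_nat1.
rewrite ring_dist_sumSS.
by have /andP[] := IH k (ltnW (ltnSn k.+1)); nia.
Qed.

(** * Words *)

Section Words.
Variable n : nat.
Local Notation word := {ffun 'I_n -> bool}.

Definition weight (a : word) : nat := \sum_(j : 'I_n) (a j : nat).

Lemma weight0 : weight [ffun => false] = 0.
Proof. by rewrite /weight big1 // => j _; rewrite ffunE. Qed.

Lemma weight_le (a : word) : weight a <= n.
Proof.
rewrite -[n]card_ord -sum1_card.
by apply: leq_sum => j _; apply: leq_b1.
Qed.

Lemma sum_const_word (c : nat) : \sum_(a : word) c = 2 ^ n * c.
Proof. by rewrite sum_nat_const card_ffun card_bool card_ord. Qed.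

Lemma card_set_word (P : pred word) : #|[set a | P a]| = \sum_a (P a : nat).
Proof. by rewrite -sum1_card big_mkcond /=; apply: eq_bigr => a _; rewrite inE. Qed.

Definition wordC (a : word) : word := [ffun j => ~~ a j].

Lemma wordCK : involutive wordC.
Proof. by move=> a; apply/ffunP => j; rewrite !ffunE negbK. Qed.

Lemma sum_word_pairs (F : word -> nat) c :
  (forall a, F a + F (wordC a) = c) -> 2 * \sum_a F a = c * 2 ^ n.
Proof.
move=> FC; rewrite mul2n -addnn {2}(reindex_inj (inv_inj wordCK)) -big_split /=.
by rewrite (eq_bigr (fun _ => c)) // sum_const_word mulnC.
Qed.

Lemma sum_weight : 2 * \sum_(a : word) weight a = n * 2 ^ n.
Proof.
apply: sum_word_pairs => a; rewrite /weight -big_split /=.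
rewrite -[n in RHS]card_ord -sum1_card.
by apply: eq_bigr => j _; rewrite ffunE; case: (a j).
Qed.

Lemma sum_bit (j : 'I_n) : 2 * \sum_(a : word) (a j : nat) = 2 ^ n.
Proof.
by rewrite -[2 ^ n]mul1n; apply: sum_word_pairs => a; rewrite ffunE; case: (a j).
Qed.

Lemma flipbitK (a : word) k : flipbit (flipbit a k) k = a.
Proof. by apply/ffunP => j; rewrite !ffunE -addbA addbb addbF. Qed.

Lemma weight_flip_le (a : word) (j0 : 'I_n) k :
  val j0 = k %% n -> weight (flipbit a k) <= (weight a).+1.
Proof.
move=> j0k; rewrite /weight (bigD1 j0) //= [X in _ <= X.+1](bigD1 j0) //= ffunE j0k eqxx.
rewrite (eq_bigr (fun j => (a j : nat))); first by case: (a j0) => /=; lia.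
move=> j /= jj0; rewrite ffunE; case: eqP => [jk|]; last by rewrite addbF.
by case/eqP: jj0; apply/val_inj; rewrite /= jk.
Qed.

Lemma weight_flip_set (a : word) (j0 : 'I_n) k :
  a j0 -> val j0 = k %% n -> (weight (flipbit a k)).+1 = weight a.
Proof.
move=> aj0 j0k; rewrite /weight (bigD1 j0) //= [in RHS](bigD1 j0) //= ffunE j0k eqxx aj0.
congr (_ + _).+1; apply: eq_bigr => j jj0; rewrite ffunE.
case: eqP => [jk|]; last by rewrite addbF.
by case/eqP: jj0; apply/val_inj; rewrite /= jk.
Qed.

End Words.

(** * Tours on the recursive cube of rings *)

Lemma RCRdist_ball n d r (u v : RCRvert n r) k :
  v \in RCRball d u k -> k < #|RCRvert n r| ->
  v \in RCRball d u (RCRdist d u v) /\ RCRdist d u v <= k.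
Proof.
move=> vk kV; set P := fun k => v \in RCRball d u k.
have hasP : has P (iota 0 #|RCRvert n r|) by apply/hasP; exists k; rewrite ?mem_iota.
have distV : RCRdist d u v < #|RCRvert n r| by move: hasP; rewrite has_find size_iota.
split; first by have := nth_find 0 hasP; rewrite nth_iota.
by case: leqP => // /(before_find 0); rewrite nth_iota // add0n vk.
Qed.

Section RecursiveCubeOfRings.
Variables n d r : nat.
Hypothesis d_gt0 : 0 < d.
Hypothesis r_gt2 : 2 < r.
Hypothesis n_eq : n = d * r.

Local Notation word := {ffun 'I_n -> bool}.
Local Notation vertex := (RCRvert n r).

Lemma r_gt0 : 0 < r. Proof. exact: leq_trans r_gt2. Qed.

Lemma n_gt0 : 0 < n. Proof. by rewrite n_eq muln_gt0 d_gt0 r_gt0. Qed.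

Definition root : vertex := ([ffun => false], Ordinal r_gt0).

(* Block [y] of coordinates, e_(i + d y) for 1 <= i <= d: these are the bits
   that can be flipped while standing at ring position [y]. *)
Definition block_bit (i : 'I_d) (y : nat) : 'I_n :=
  Ordinal (ltn_pmod (i.+1 + d * y) n_gt0).

Definition in_block (j : 'I_n) (y : nat) := [exists i, j == block_bit i y].

Definition block_used (a : word) (y : nat) := [exists j, a j && in_block j y].

Lemma flipbit_block (a : word) (i : 'I_d) x j :
  flipbit a (i.+1 + d * x) j = a j (+) (j == block_bit i x).
Proof. by rewrite ffunE. Qed.

Lemma block_bit_inj (i i' : 'I_d) x y : x < r -> y < r -> block_bit i x = block_bit i' y -> x = y.
Proof.
have block_le (j : 'I_d) z : z < r -> 0 < j.+1 + d * z <= n.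
  by move=> zr; rewrite n_eq; have := ltn_ord j; nia.
move=> xr yr /(congr1 val) /= /modn_inj_pos eq_bits.
move: {eq_bits}(eq_bits (block_le i x xr) (block_le i' y yr)).
have divK (j : 'I_d) z : (j + d * z) %/ d = z.
  by rewrite mulnC divnDMl ?divn_small ?(leq_ltn_trans _ (ltn_ord j)).
by rewrite !addSn => -[/(congr1 (divn^~ d))]; rewrite !divK.
Qed.

Lemma in_block_cover (j : 'I_n) : exists2 y, y < r & in_block j y.
Proof.
have jn := ltn_ord j; case: (posnP (val j)) => [j0|jp].
  exists r.-1; first by rewrite prednK ?r_gt0.
  have dd : d.-1 < d by rewrite prednK.
  apply/existsP; exists (Ordinal dd); apply/eqP/val_inj.
  by rewrite /= j0 prednK // -mulnS prednK ?r_gt0 // -n_eq modnn.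
have jd : (val j).-1 %% d < d by rewrite ltn_mod.
exists ((val j).-1 %/ d).
  by rewrite ltn_divLR // mulnC -n_eq (leq_ltn_trans (leq_pred _)).
apply/existsP; exists (Ordinal jd); apply/eqP/val_inj.
by rewrite /= addSn addnC mulnC -divn_eq prednK // modn_small.
Qed.

Lemma blocks_unused (a : word) :
  (forall y, y < r -> ~~ block_used a y) -> a = [ffun => false].
Proof.
move=> unused; apply/ffunP => j; rewrite ffunE; apply/negbTE/negP => aj.
have [y yr jy] := in_block_cover j.
by move: (unused y yr) => /existsP; apply; exists j; rewrite aj.
Qed.

Definition ring_adj (x' x : nat) := (x == (x' + 1) %% r) || (x' == (x + 1) %% r).

Lemma RCRadj_ring (a : word) (X' X : 'I_r) : ring_adj X' X -> RCRadj d (a, X') (a, X).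
Proof. by rewrite /RCRadj /ring_adj /= eqxx => ->. Qed.

Lemma RCRadj_flip (a : word) (X : 'I_r) (i : 'I_d) : RCRadj d (flipbit a (i.+1 + d * X), X) (a, X).
Proof.
by apply/orP; right; rewrite /= eqxx; apply/existsP; exists i; rewrite flipbitK.
Qed.

Lemma RCRadjP (w v : vertex) : RCRadj d w v ->
  (v.1 = w.1 /\ ring_adj w.2 v.2) \/
  (v.2 = w.2 /\ exists i : 'I_d, v.1 = flipbit w.1 (i.+1 + d * w.2)).
Proof.
case/orP => [/andP[/eqP -> adj]|/andP[/eqP -> /existsP[i /eqP ->]]].
  by left.
by right; split=> //; exists i.
Qed.

(* A walk on the ring from 0 that has explored the arc from -p to q and ends
   at x after a final leg of length m, forward if s and backward otherwise,
   that it never retraces: it makes 2 (p + q) - m ring moves. *)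
Definition tour_end (x p q m : nat) (s : bool) :=
  if s then (m <= q) && (m %% r == x) else (m <= p) && ((x + m) %% r == 0).

Definition covers (a : word) (p q : nat) :=
  forall y, y < r -> block_used a y -> (y <= q) || (r <= y + p).

Definition tour a x p q m s := covers a p q /\ tour_end x p q m s.

Definition tour_cost p q m := 2 * (p + q) - m.

Definition tour_within (v : vertex) k :=
  exists p q m s, tour v.1 v.2 p q m s /\ weight v.1 + tour_cost p q m <= k.

Lemma covers_widen a p q p' q' : p <= p' -> q <= q' -> covers a p q -> covers a p' q'.
Proof. by move=> pp qq cov y yr /(cov y yr) /orP[] ?; apply/orP; [left|right]; lia. Qed.

Lemma tour_end_covered x p q m s : x < r -> tour_end x p q m s -> (x <= q) || (r <= x + p).
Proof.
move=> xr; case: s => /andP[mq /eqP mx]; first by rewrite -mx (leq_trans (leq_mod _ _) mq).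
case: (posnP x) => [->|x_gt0]; first by rewrite leq0n.
have /dvdn_leq : r %| x + m.
  by apply/dvdnP; exists ((x + m) %/ r); rewrite {1}(divn_eq (x + m) r) mx addn0.
by rewrite addn_gt0 x_gt0 => /(_ isT) rxm; apply/orP; right; lia.
Qed.

Lemma tour_succ a x p q m s : tour a x p q m s -> exists p' q' m' s',
  tour a ((x + 1) %% r) p' q' m' s' /\ tour_cost p' q' m' <= (tour_cost p q m).+1.
Proof.
case=> cov; case: s => /andP[mq /eqP mx].
  exists p, (maxn q m.+1), m.+1, true; split; last by rewrite /tour_cost; lia.
  split; first exact: covers_widen (leq_maxl _ _) cov.
  by rewrite /tour_end leq_maxr -mx modnDml addn1 eqxx.
case: (posnP m) => [m0|m_gt0].
  exists p, (maxn q 1), 1, true; split; last by rewrite /tour_cost; lia.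
  split; first exact: covers_widen (leq_maxl _ _) cov.
  by move: mx; rewrite m0 addn0 /tour_end leq_maxr -modnDml => ->; rewrite add0n eqxx.
exists p, q, m.-1, false; split; last by rewrite /tour_cost; lia.
split=> //; rewrite /tour_end (leq_trans (leq_pred _) mq) modnDml.
by rewrite addn1 addSn -addnS prednK // mx.
Qed.

Lemma tour_pred a x x' p q m s : x' < r -> (x' + 1) %% r = x -> tour a x p q m s ->
  exists p' q' m' s', tour a x' p' q' m' s' /\ tour_cost p' q' m' <= (tour_cost p q m).+1.
Proof.
move=> x'r x'x [cov]; case: s => /andP[mq /eqP mx].
  case: (posnP m) => [m0|m_gt0].
    exists (maxn p 1), q, 1, false; split; last by rewrite /tour_cost; lia.
    split; first exact: covers_widen (leq_maxl _ _) (leqnn _) cov.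
    by rewrite /tour_end leq_maxr x'x -mx m0 mod0n.
  exists p, q, m.-1, true; split; last by rewrite /tour_cost; lia.
  split=> //; rewrite /tour_end (leq_trans (leq_pred _) mq).
  by apply/eqP/modn_pred_eq => //; rewrite mx -x'x addn1.
exists (maxn p m.+1), q, m.+1, false; split; last by rewrite /tour_cost; lia.
split; first exact: covers_widen (leq_maxl _ _) (leqnn _) cov.
by rewrite /tour_end leq_maxr addnS -addSn -addn1 -modnDml x'x mx.
Qed.

Lemma tour_flip a x p q m s (i : 'I_d) :
  x < r -> tour a x p q m s -> tour (flipbit a (i.+1 + d * x)) x p q m s.
Proof.
move=> xr [cov xend]; split=> // y yr /existsP[j /andP[]]; rewrite flipbit_block.
case: eqP => [-> _ /existsP[i' /eqP /block_bit_inj xy] | _].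
  by rewrite -(xy xr yr); apply: tour_end_covered xend.
by rewrite addbF => aj jy; apply: cov => //; apply/existsP; exists j; rewrite aj.
Qed.

Lemma tour_within_adj w v k : RCRadj d w v -> tour_within w k -> tour_within v k.+1.
Proof.
case: w v => a X [b Y] /RCRadjP /= [[-> adj] | [-> [i ->]]] [p [q [m [s []]]]] /= tw wk.
  case/orP: adj => /eqP YX.
    have [p' [q' [m' [s' [tw' cost']]]]] := tour_succ tw.
    by exists p', q', m', s'; rewrite /= YX; split=> //; lia.
  have [p' [q' [m' [s' [tw' cost']]]]] := tour_pred (ltn_ord Y) (esym YX) tw.
  by exists p', q', m', s'; split=> //=; lia.
exists p, q, m, s; split; first exact: tour_flip.
by rewrite /=; have := @weight_flip_le _ a (block_bit i X) _ erefl; lia.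
Qed.

Definition ring_pred x := (x + r.-1) %% r.

Lemma ring_pred_lt x : ring_pred x < r.
Proof. by rewrite ltn_mod r_gt0. Qed.

Lemma ring_predK x : x < r -> (ring_pred x + 1) %% r = x.
Proof.
move=> xr; rewrite modnDml -addnA addn1 prednK ?r_gt0 //.
by rewrite -modnDmr modnn addn0 modn_small.
Qed.

Definition tour_before a x c := exists x' p q m s,
  [/\ x' < r, tour a x' p q m s, tour_cost p q m < c & ring_adj x' x].

Lemma tour_before_origin a p q : 0 < p + q -> covers a p q -> tour_before a 0 (tour_cost p q 0).
Proof.
move=> pq cov; case: (posnP q) => [q0|q_gt0].
  exists (ring_pred 0), p, q, 1, false; split.
  - exact: ring_pred_lt.
  - by split=> //; rewrite /tour_end ring_predK ?r_gt0 // andbT; lia.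
  - by rewrite /tour_cost; lia.
  - by rewrite /ring_adj ring_predK ?r_gt0 // eqxx.
have r_gt1 : 1 < r by apply: ltn_trans r_gt2.
exists 1, p, q, 1, true; split=> //.
- by split=> //; rewrite /tour_end q_gt0 modn_small.
- by rewrite /tour_cost; lia.
- by rewrite /ring_adj add0n (modn_small r_gt1) eqxx orbT.
Qed.

Lemma tour_before_fwd a x p q m : x < r -> 0 < m -> ~~ block_used a x ->
  tour a x p q m true -> tour_before a x (tour_cost p q m).
Proof.
move=> xr m_gt0 xfree [cov /andP[mq /eqP mx]].
have [mlq|qm] := ltnP m q.
  exists ((x + 1) %% r), p, q, m.+1, true; split.
  - by rewrite ltn_mod r_gt0.
  - by split=> //; rewrite /tour_end mlq -addn1 -modnDml mx eqxx.
  - by rewrite /tour_cost; lia.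
  - by rewrite /ring_adj eqxx orbT.
have qm_eq : q = m by apply/eqP; rewrite eqn_leq mq qm.
subst q.
exists (ring_pred x), p, m.-1, m.-1, true; split.
- exact: ring_pred_lt.
- split.
    move=> y yr yused; case/orP: (cov y yr yused) => [|->]; last by rewrite orbT.
    rewrite leq_eqVlt => /predU1P[ym|ylt].
      by move: yused; rewrite -(modn_small yr) ym mx (negbTE xfree).
    by rewrite -[y <= _]ltnS prednK // ylt.
  rewrite /tour_end leqnn; apply/eqP/modn_pred_eq => //; first exact: ring_pred_lt.
  by rewrite mx -{1}(ring_predK xr) addn1.
- by rewrite /tour_cost; lia.
- by rewrite /ring_adj ring_predK // eqxx.
Qed.

Lemma tour_before_bwd a x p q m : x < r -> 0 < m -> ~~ block_used a x ->
  tour a x p q m false -> tour_before a x (tour_cost p q m).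
Proof.
move=> xr m_gt0 xfree [cov /andP[mp /eqP mx]].
have [mlp|pm] := ltnP m p.
  exists (ring_pred x), p, q, m.+1, false; split.
  - exact: ring_pred_lt.
  - split=> //; rewrite /tour_end mlp addnS -addSn -[(ring_pred x).+1]addn1.
    by rewrite -modnDml ring_predK // mx.
  - by rewrite /tour_cost; lia.
  - by rewrite /ring_adj ring_predK // eqxx.
have pm_eq : p = m by apply/eqP; rewrite eqn_leq mp pm.
subst p.
exists ((x + 1) %% r), m.-1, q, m.-1, false; split.
- by rewrite ltn_mod r_gt0.
- split.
    move=> y yr yused; case/orP: (cov y yr yused) => [->//|].
    rewrite leq_eqVlt => /predU1P[ym|rym].
      suff xy : x = y by move: yused; rewrite -xy (negbTE xfree).
      rewrite -(modn_small xr) -(modn_small yr); apply/eqP.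
      by rewrite -(eqn_modDr m) mx -ym modnn.
    by rewrite -[r <= _]ltnS -addnS prednK // rym orbT.
  by rewrite /tour_end leqnn modnDml -addnA add1n prednK // mx.
- by rewrite /tour_cost; lia.
- by rewrite /ring_adj eqxx orbT.
Qed.

Lemma tour_before_ring a x p q m s : x < r -> ~~ block_used a x -> 0 < p + q ->
  tour a x p q m s -> tour_before a x (tour_cost p q m).
Proof.
move=> xr xfree pq [cov xend]; case: (posnP m) => [m0|m_gt0].
  have -> : x = 0.
    by move: xend; rewrite m0 /tour_end addn0 mod0n (modn_small xr); case: s => /andP[_ /eqP].
  by rewrite m0; apply: tour_before_origin.
by case: s xend => xend; [apply: tour_before_fwd | apply: tour_before_bwd].
Qed.

Lemma tour_root a x m s : x < r -> ~~ block_used a x -> tour a x 0 0 m s ->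
  a = [ffun => false] /\ x = 0.
Proof.
move=> xr xfree [cov xend].
have x0 : x = 0.
  case: s xend => /andP[]; rewrite leqn0 => /eqP -> /eqP.
    by rewrite mod0n => <-.
  by rewrite addn0 (modn_small xr).
split=> //; apply: blocks_unused => y yr; apply/negP => yused.
move: (cov y yr yused); rewrite addn0 leqn0 leqNgt yr orbF => /eqP y0.
by move: xfree; rewrite x0 -y0 yused.
Qed.

Lemma tour_within_descend v k : v != root -> tour_within v k ->
  0 < k /\ exists2 w, RCRadj d w v & tour_within w k.-1.
Proof.
case: v => a X /= not_root [p [q [m [s [/= tw wk]]]]].
case xused: (block_used a X).
  move: xused => /existsP[j /andP[aj /existsP[i /eqP jX]]].
  rewrite jX in aj; have weightS := weight_flip_set aj erefl.
  split; first by lia.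
  exists (flipbit a (i.+1 + d * X), X); first exact: RCRadj_flip.
  by exists p, q, m, s; split; [apply: tour_flip | rewrite /=; lia].
case: (posnP (p + q)) => [pq0|pq].
  move: pq0 tw => /eqP; rewrite addn_eq0 => /andP[/eqP-> /eqP->] tw.
  have [a0 X0] := tour_root (ltn_ord X) (negbT xused) tw.
  by case/eqP: not_root; rewrite a0; congr (_, _); apply: val_inj.
have [x' [p' [q' [m' [s' [x'r tw' cost' adj]]]]]] :=
  tour_before_ring (ltn_ord X) (negbT xused) pq tw.
split; first by lia.
exists (a, Ordinal x'r); first exact: RCRadj_ring.
by exists p', q', m', s'; split=> //=; lia.
Qed.

Lemma root_in_ball k : root \in RCRball d root k.
Proof. by elim: k => [|k IH] /=; rewrite !inE ?eqxx ?IH. Qed.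

Lemma tour_within_root : tour_within root 0.
Proof.
exists 0, 0, 0, true; split; last by rewrite /= weight0.
split=> [y yr /existsP[j]|]; first by rewrite ffunE.
by rewrite /tour_end mod0n.
Qed.

Lemma tour_within_mono v k k' : k <= k' -> tour_within v k -> tour_within v k'.
Proof.
by move=> kk' [p [q [m [s [tw wk]]]]]; exists p, q, m, s; split=> //; apply: leq_trans kk'.
Qed.

Lemma mem_RCRball_tour k v : v \in RCRball d root k <-> tour_within v k.
Proof.
split.
  elim: k v => [|k IH] v /=; first by rewrite inE => /eqP ->; apply: tour_within_root.
  rewrite !inE => /orP[/IH|/existsP[w /andP[/IH tw adj]]]; first exact: tour_within_mono.
  exact: tour_within_adj adj tw.
elim: k v => [|k IH] v tv; case: (eqVneq v root) => [->|not_root]; rewrite ?root_in_ball //.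
  by have [] := tour_within_descend not_root tv.
have [_ [w adj tw]] := tour_within_descend not_root tv.
by rewrite /= !inE; apply/orP; right; apply/existsP; exists w; rewrite IH.
Qed.

Lemma tour_within_RCRdist v k : tour_within v k -> k < #|vertex| ->
  tour_within v (RCRdist d root v) /\ RCRdist d root v <= k.
Proof. by move=> /mem_RCRball_tour vk /(RCRdist_ball vk) [/mem_RCRball_tour]. Qed.

(** * Distance bounds for a single vertex *)

Lemma tour_cost_ge_ring_dist x p q m s : tour_end x p q m s -> minn x (r - x) <= tour_cost p q m.
Proof.
rewrite /tour_cost; case: s => /andP[mq /eqP mx].
  by case: (modn_eq_cases mx); lia.
by case: (modn_eq0_cases mx) => [|[|]]; lia.
Qed.

Lemma tour_cost_ge2 a p q m s : tour a 0 p q m s -> block_used a 1 -> 2 <= tour_cost p q m.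
Proof.
move=> [cov xend] used1; have := cov 1 (ltn_trans (isT : 1 < 2) r_gt2) used1.
rewrite /tour_cost; case: s xend => /andP[mq /eqP mx] /orP[] ?.
- by case: (modn_eq_cases mx); lia.
- by case: (modn_eq_cases mx); lia.
- by rewrite add0n in mx; case: (modn_eq0_cases mx) => [|[|]]; lia.
- by rewrite add0n in mx; case: (modn_eq0_cases mx) => [|[|]]; lia.
Qed.

(* The length of a ring walk from 0 that visits every position and ends at x. *)
Definition full_tour_cost x := if x == 0 then r else r - 2 + minn x (r - x).

Lemma full_tour_cost_le x : full_tour_cost x <= 2 * r.
Proof. by rewrite /full_tour_cost; case: eqP; lia. Qed.

Lemma full_tour_cost_le_tour x p q m s : x < r -> tour_end x p q m s ->
  full_tour_cost x <= tour_cost p q m + 2 * (r.-1 - (p + q)).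
Proof.
move=> xr; rewrite /tour_cost /full_tour_cost; case: s => /andP[mq /eqP mx].
  by case: (modn_eq_cases mx); case: eqP; lia.
by case: (modn_eq0_cases mx) => [|[|]]; case: eqP; lia.
Qed.

Lemma tour_within_full a (X : 'I_r) : tour_within (a, X) (weight a + full_tour_cost X).
Proof.
case: X => x xr; rewrite /full_tour_cost /=.
case: eqP => [x0|/eqP x_neq0].
  exists 0, r, r, true; split; last by rewrite /tour_cost /=; lia.
  split=> [y yr _|]; first by rewrite ltnW.
  by rewrite /tour_end /= x0 leqnn modnn.
have [xl|xg] := leqP x (r - x).
  exists (r - x), x.-1, (r - x), false; split; last by rewrite /tour_cost /=; lia.
  split=> [y yr _|]; first by apply/orP; case: (leqP y x.-1) => ?; [left|right; lia].
  by rewrite /tour_end leqnn subnKC ?modnn // ltnW.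
exists (r.-1 - x), x, x, true; split; last by rewrite /tour_cost /=; lia.
split=> [y yr _|]; first by apply/orP; case: (leqP y x) => ?; [left|right; lia].
by rewrite /tour_end leqnn (modn_small xr) eqxx.
Qed.

Lemma card_vertex : #|vertex| = 2 ^ n * r.
Proof. by rewrite card_prod card_ffun card_bool !card_ord. Qed.

Lemma full_tour_lt_card (a : word) (X : 'I_r) : weight a + full_tour_cost X < #|vertex|.
Proof.
have n_gt2 : 2 < n by rewrite n_eq (leq_trans r_gt2) // leq_pmull.
have nr : n + 2 * r < n.+1 * r by rewrite mulSn; nia.
rewrite card_vertex (leq_ltn_trans (leq_add (weight_le a) (full_tour_cost_le X))) //.
by rewrite (leq_trans nr) // leq_mul2r ltn_expl ?orbT.
Qed.

Lemma RCRdist_full_tour (v : vertex) :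
  tour_within v (RCRdist d root v) /\ RCRdist d root v <= weight v.1 + full_tour_cost v.2.
Proof.
by case: v => a X; apply: tour_within_RCRdist (tour_within_full a X) (full_tour_lt_card a X).
Qed.

Definition block_head y := block_bit (Ordinal d_gt0) y.

Lemma RCRdist_ge_ring_dist (a : word) (X : 'I_r) :
  weight a + minn X (r - X) + 2 * ((val X == 0) && a (block_head 1)) <= RCRdist d root (a, X).
Proof.
have [[p [q [m [s [[cov xend] /= dist_ge]]]]] _] := RCRdist_full_tour (a, X).
apply: leq_trans dist_ge; have ring_le := tour_cost_ge_ring_dist xend.
case: eqP => [X0|_]; last by rewrite andFb muln0 addn0 leq_add2l.
case a1: (a (block_head 1)); last by rewrite muln0 addn0 leq_add2l.
have used1 : block_used a 1.
  by apply/existsP; exists (block_head 1); rewrite a1; apply/existsP; exists (Ordinal d_gt0).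
rewrite X0 in xend; have := tour_cost_ge2 (conj cov xend) used1.
by rewrite X0 min0n; lia.
Qed.

Definition empty_run k y0 (a : word) :=
  [forall y : 'I_r, (y0 <= y <= y0 + k) ==> ~~ block_used a y].

Definition has_empty_run k (a : word) := [exists y0 : 'I_r, (y0 + k < r) && empty_run k y0 a].

(* The r - 1 - (p + q) positions strictly between q and r - p are never visited. *)
Lemma tour_gap a p q k : covers a p q -> k < r.-1 - (p + q) -> has_empty_run k a.
Proof.
move=> cov kpq; have q_lt : q.+1 < r by lia.
apply/existsP; exists (Ordinal q_lt); apply/andP; split; first by rewrite /=; lia.
apply/forallP => y; apply/implyP => /andP[qy yk]; apply/negP => used.
by move: qy yk; rewrite /= => qy yk; case/orP: (cov y (ltn_ord y) used); lia.
Qed.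

Lemma RCRdist_ge_full_tour k (a : word) (X : 'I_r) :
  weight a + full_tour_cost X <=
  RCRdist d root (a, X) + 2 * k + has_empty_run k a * full_tour_cost X.
Proof.
have [[p [q [m [s [[cov xend] /= dist_ge]]]]] _] := RCRdist_full_tour (a, X).
case: (boolP (has_empty_run k a)) => [_|no_run]; first by rewrite mul1n; lia.
have full_le := full_tour_cost_le_tour (ltn_ord X) xend.
case: (leqP (r.-1 - (p + q)) k) => [gap_le|gap_gt]; first by lia.
by case/negP: no_run; apply: tour_gap gap_gt.
Qed.

Lemma card_empty_run k y0 : y0 + k < r -> #|[set a | empty_run k y0 a]| * 2 ^ k.+1 <= 2 ^ n.
Proof.
move=> run_lt; pose heads := [set block_head (y0 + i) | i : 'I_k.+1].
have card_heads : #|heads| = k.+1.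
  rewrite card_imset ?card_ord // => i i' /block_bit_inj eq_i.
  apply/val_inj/eqP; rewrite -(eqn_add2l y0) eq_i //.
    by have := ltn_ord i; lia.
  by have := ltn_ord i'; lia.
have runs_sub : [set a | empty_run k y0 a] \subset pffun_on false (~: heads) predT.
  apply/subsetP => a; rewrite inE => /forallP run; apply/pffun_onP; split=> //.
  apply/subsetP => j; rewrite !inE /= => aj; apply/imsetP => -[i _ j_head].
  have yr : y0 + i < r by have := ltn_ord i; lia.
  move: (run (Ordinal yr)); rewrite /= leq_addr leq_add2l -ltnS ltn_ord /=.
  case/negP; apply/existsP; exists j; apply/andP; split; first by move: aj; case: (a j).
  by apply/existsP; exists (Ordinal d_gt0); rewrite j_head.
have := subset_leq_card runs_sub; rewrite card_pffun_on card_bool.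
have := cardsC heads; rewrite card_heads card_ord => card_split.
move=> /leq_mul /(_ (leqnn (2 ^ k.+1))) /leq_trans; apply.
by rewrite -expnD addnC card_split.
Qed.

Lemma card_has_empty_run k : #|[set a | has_empty_run k a]| * 2 ^ k.+1 <= r * 2 ^ n.
Proof.
rewrite card_set_word.
have runs_le : \sum_a (has_empty_run k a : nat) <=
    \sum_a \sum_(y0 : 'I_r | y0 + k < r) (empty_run k y0 a : nat).
  apply: leq_sum => a _; case: (boolP (has_empty_run k a)) => // /existsP[y0 /andP[y0k run]].
  by rewrite (bigD1 y0) //= run.
rewrite exchange_big /= in runs_le.
apply: leq_trans (leq_mul runs_le (leqnn _)) _; rewrite big_distrl /=.
apply: (@leq_trans (\sum_(y0 : 'I_r | y0 + k < r) 2 ^ n)).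
  by apply: leq_sum => y0 y0k; rewrite -card_set_word card_empty_run.
apply: (@leq_trans (\sum_(y0 : 'I_r) 2 ^ n)); last by rewrite sum_nat_const card_ord.
by rewrite [X in _ <= X](bigID (fun y0 : 'I_r => y0 + k < r)) leq_addr.
Qed.

(** * Summing over all vertices *)

Lemma sum_full_tour_cost_bounds :
  5 * r * r + 7 <= 4 * \sum_(X : 'I_r) full_tour_cost X + 8 * r <= 5 * r * r + 8.
Proof.
have -> : \sum_(X : 'I_r) full_tour_cost X = r + r.-1 * (r - 2) + ring_dist_sum r.
  rewrite -(big_mkord xpredT full_tour_cost) (big_ltn r_gt0) {1}/full_tour_cost eqxx.
  rewrite (eq_big_nat _ _ (F2 := fun x => (r - 2) + minn x (r - x))); last first.
    by move=> x /andP[x_gt0 _]; rewrite /full_tour_cost gtn_eqF.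
  by rewrite big_split /= sum_nat_const_nat /ring_dist_sum (big_ltn r_gt0) min0n add0n addnA subn1.
have /andP[lo hi] := ring_dist_sum_bounds r.
have square : r.-1 * (r - 2) + 3 * r = r * r + 2.
  have -> : r = (r - 3).+3 by lia.
  by move: (r - 3) => t; rewrite !subSS /= subn0; nia.
by apply/andP; split; nia.
Qed.

Lemma RCRtdE : RCRtd n d r = \sum_(a : word) \sum_(X : 'I_r) RCRdist d root (a, X).
Proof.
rewrite /RCRtd (big_pred1 root) => [|[a X] //].
by rewrite pair_bigA; apply: eq_bigr => -[].
Qed.

Lemma sum_vertex_split (F : word -> nat) (G : 'I_r -> nat) :
  \sum_(a : word) \sum_(X : 'I_r) (F a + G X) = r * \sum_a F a + 2 ^ n * \sum_X G X.
Proof.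
rewrite (eq_bigr (fun a => r * F a + \sum_X G X)) => [|a _]; last first.
  by rewrite big_split /= sum_nat_const card_ord.
by rewrite big_split /= -big_distrr sum_const_word.
Qed.

Lemma RCRtd_le_full :
  RCRtd n d r <= r * \sum_(a : word) weight a + 2 ^ n * \sum_(X : 'I_r) full_tour_cost X.
Proof.
rewrite RCRtdE -sum_vertex_split; apply: leq_sum => a _; apply: leq_sum => X _.
exact: (RCRdist_full_tour (a, X)).2.
Qed.

Lemma RCRtd_ge_ring_dist : r * \sum_(a : word) weight a + 2 ^ n * ring_dist_sum r
  + 2 * \sum_(a : word) (a (block_head 1) : nat) <= RCRtd n d r.
Proof.
rewrite RCRtdE /ring_dist_sum big_mkord -sum_vertex_split big_distrr -big_split /=.
apply: leq_sum => a _.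
apply: (@leq_trans (\sum_(X < r) (weight a + minn X (r - X)
    + 2 * ((val X == 0) && a (block_head 1))))); last first.
  by apply: leq_sum => X _; apply: RCRdist_ge_ring_dist.
rewrite [X in _ <= X]big_split /= leq_add2l (bigD1 (Ordinal r_gt0)) //= big1 ?addn0 // => X X_neq0.
by case: eqP => // X0; case/eqP: X_neq0; apply: val_inj.
Qed.

Lemma RCRtd_ge_full k :
  r * \sum_(a : word) weight a + 2 ^ n * \sum_(X : 'I_r) full_tour_cost X <=
  RCRtd n d r + 2 ^ n * (r * (2 * k))
  + #|[set a | has_empty_run k a]| * \sum_(X : 'I_r) full_tour_cost X.
Proof.
rewrite -sum_vertex_split; apply: (@leq_trans (\sum_(a : word) \sum_(X : 'I_r)
    (RCRdist d root (a, X) + 2 * k + has_empty_run k a * full_tour_cost X))).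
  by apply: leq_sum => a _; apply: leq_sum => X _; apply: RCRdist_ge_full_tour.
rewrite RCRtdE card_set_word big_distrl /= -[2 ^ n * _]sum_const_word -!big_split /=.
apply: eq_leq; apply: eq_bigr => a _.
by rewrite 2!big_split sum_nat_const card_ord -big_distrr.
Qed.

Lemma RCRtd_upper : 4 * RCRtd n d r + 8 * r * 2 ^ n <= 2 ^ n * (2 * n * r + 5 * r * r + 8).
Proof.
have td_le := RCRtd_le_full; have sum_w := sum_weight n.
have /andP[_ sum_le] := sum_full_tour_cost_bounds.
set W := \sum_(a : word) weight a in td_le sum_w.
set S := \sum_(X : 'I_r) full_tour_cost X in td_le sum_le.
have : 2 ^ n * (4 * S + 8 * r) <= 2 ^ n * (5 * r * r + 8) by rewrite leq_mul2l sum_le orbT.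
nia.
Qed.

Lemma RCRtd_lower : 2 ^ n * (2 * n * r + r * r) <= 4 * RCRtd n d r.
Proof.
have td_ge := RCRtd_ge_ring_dist; have sum_w := sum_weight n.
have sum_h := sum_bit (block_head 1); have /andP[_ ring_ge] := ring_dist_sum_bounds r.
set W := \sum_(a : word) weight a in td_ge sum_w.
set H := \sum_(a : word) (a (block_head 1) : nat) in td_ge sum_h.
have : 2 ^ n * (r * r) <= 2 ^ n * (4 * ring_dist_sum r + 1) by rewrite leq_mul2l ring_ge orbT.
nia.
Qed.

Lemma RCRtd_lower_log : 2 ^ n * (2 * n * r + 5 * r * r) <=
  4 * RCRtd n d r + 2 ^ n * r * (16 * (trunc_log 2 r).+1 + 11).
Proof.
set m := (trunc_log 2 r).+1.
have td_ge := RCRtd_ge_full (2 * m); have sum_w := sum_weight n.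
have /andP[sum_ge sum_le] := sum_full_tour_cost_bounds.
have runs := card_has_empty_run (2 * m).
set W := \sum_(a : word) weight a in td_ge sum_w.
set S := \sum_(X : 'I_r) full_tour_cost X in td_ge sum_ge sum_le.
set B := #|[set a | has_empty_run (2 * m) a]| in td_ge runs.
set E := 2 ^ n in td_ge sum_w runs *.
have r_lt : r < 2 ^ m by apply: trunc_log_ltn.
have runs_le : 2 * (B * r) <= E.
  have sq : r * r <= 2 ^ (2 * m) by rewrite mul2n -addnn expnD leq_mul // ltnW.
  have : r * (2 * (B * r)) <= r * E.
    by apply: leq_trans runs; rewrite expnS; have := leq_mul (leqnn B) sq; nia.
  by rewrite leq_mul2l gtn_eqF ?r_gt0.
have S_le : 4 * S <= 5 * r * r by lia.
have E_S : E * (5 * r * r + 7) <= E * (4 * S + 8 * r) by rewrite leq_mul2l sum_ge orbT.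
have B_S : B * (4 * S) <= B * (5 * r * r) by rewrite leq_mul2l S_le orbT.
nia.
Qed.

End RecursiveCubeOfRings.

(* Imported only now: it rebinds the nat notations, e.g. [^] to [Nat.pow]. *)
From Stdlib Require Import Reals Lra.

Lemma INR_expn2 k : INR (expn 2 k) = (2 ^ k)%R.
Proof.
have -> : expn 2 k = (2 ^ k)%nat by elim: k => // k IH; rewrite expnS IH.
by rewrite pow_INR.
Qed.

Lemma INR_leq (a b : nat) : (a <= b)%N -> (INR a <= INR b)%R.
Proof. by move/leP; apply: le_INR. Qed.

Lemma pow2_sub2 (n : nat) : (2 <= n)%N -> (2 ^ n = 4 * 2 ^ (n - 2))%R.
Proof. by move=> n_ge2; rewrite -{1}(subnKC n_ge2) pow_add; simpl; ring. Qed.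

Lemma trunc_log2_le_log2 (r : nat) : (0 < r)%N -> (INR (trunc_log 2 r) <= ln (INR r) / ln 2)%R.
Proof.
move=> r_gt0; have ln2_gt0 : (0 < ln 2)%R by have := ln_lt_2; lra.
have pow_le : (2 ^ trunc_log 2 r <= INR r)%R by rewrite -INR_expn2; apply/INR_leq/trunc_logP.
apply: (Rmult_le_reg_r (ln 2)) => //; rewrite /Rdiv Rmult_assoc Rinv_l; last lra.
rewrite Rmult_1_r -ln_pow; last lra.
case: (Rle_lt_or_eq_dec _ _ pow_le) => [lt|->]; last lra.
by apply/Rlt_le/ln_increasing => //; apply: pow_lt; lra.
Qed.

Section RealBounds.
Variables n d r : nat.
Hypothesis d_gt0 : (0 < d)%N.
Hypothesis r_gt2 : (2 < r)%N.
Hypothesis n_eq : n = (d * r)%N.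
Hypothesis n_ge2 : (2 <= n)%N.

Local Notation td := (INR (RCRtd n d r)).
Local Notation N := (INR n).
Local Notation Rr := (INR r).
Local Notation P := (2 ^ (n - 2))%R.

Lemma Rr_ge3 : (3 <= Rr)%R.
Proof. by have := INR_leq r_gt2; rewrite S_INR /=; lra. Qed.

Lemma RCRtd_upper_R : (td <= P * (2 * N * Rr + 5 * Rr ^ 2 - 8 * Rr + 8))%R.
Proof.
have /INR_leq := RCRtd_upper d_gt0 r_gt2 n_eq.
rewrite !(plus_INR, mult_INR) INR_expn2 (pow2_sub2 n_ge2) /=.
have := pow_lt 2 (n - 2) Rlt_0_2; nra.
Qed.

Lemma RCRtd_lower_R : (P * (2 * N * Rr + Rr ^ 2) <= td)%R.
Proof.
have /INR_leq := RCRtd_lower d_gt0 r_gt2 n_eq.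
rewrite !(plus_INR, mult_INR) INR_expn2 (pow2_sub2 n_ge2) /=.
have := pow_lt 2 (n - 2) Rlt_0_2; nra.
Qed.

Lemma RCRtd_lower_log_R : (2 ^ 9 <= r)%N ->
  (P * (2 * N * Rr + 5 * Rr ^ 2) - 20 * P * Rr * (ln Rr / ln 2) ^ 2 <= td)%R.
Proof.
move=> r_large; set lg := (ln Rr / ln 2)%R.
have /INR_leq := RCRtd_lower_log d_gt0 r_gt2 n_eq.
rewrite !(plus_INR, mult_INR) INR_expn2 (pow2_sub2 n_ge2) S_INR /=.
set T := INR (trunc_log 2 r) => td_ge.
have T_ge9 : (9 <= T)%R.
  have /INR_leq := trunc_log_max (isT : (1 < 2)%N) (r_large : (expn 2 9 <= r)%N).
  by rewrite /T /=; lra.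
have T_le : (T <= lg)%R by apply: trunc_log2_le_log2; apply: leq_trans r_gt2.
have log_sq : (16 * (T + 1) + 11 <= 20 * lg ^ 2)%R.
  have : (T * T <= lg * lg)%R by apply: Rmult_le_compat; lra.
  nra.
have PR_gt0 : (0 < P * Rr)%R by have := pow_lt 2 (n - 2) Rlt_0_2; have := Rr_ge3; nra.
have : (P * Rr * (16 * (T + 1) + 11) <= P * Rr * (20 * lg ^ 2))%R.
  exact: Rmult_le_compat_l (Rlt_le _ _ PR_gt0) log_sq.
nra.
Qed.

End RealBounds.

Theorem mainTheorem12 (d r n : nat) :
  (1 <= d)%N -> (3 <= r)%N -> n = (d * r)%N -> (2 <= n)%N ->
  let td := INR (RCRtd n d r) in
  let N := INR n in let Rr := INR r in let D := INR d in
  let lg := (ln Rr / ln 2)%R in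
  ((2 ^ 9 <= r)%N ->
     (2 ^ (n - 2) * Rr ^ 2 * (2 * D + 5) * (1 - 20 * lg ^ 2 / (2 * N + 5 * Rr))
        <= td
      /\ td <= 2 ^ (n - 2) * Rr ^ 2 * (2 * D + 5)
               * (1 - 8 * (Rr - 1) / (2 * N * Rr + 5 * Rr ^ 2)))%R)
  /\
  ((r < 2 ^ 9)%N ->
     (2 ^ (n - 2) * (2 * N * Rr + Rr ^ 2) <= td
      /\ td <= 2 ^ (n - 2) * (2 * N * Rr + 5 * Rr ^ 2 - 8 * Rr + 8))%R).
Proof.
move=> d_gt0 r_gt2 n_eq n_ge2 td N Rr D lg.
have upper := RCRtd_upper_R d_gt0 r_gt2 n_eq n_ge2.
have N_eq : N = (D * Rr)%R by rewrite /N n_eq mult_INR.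
have r_ge3 : (3 <= Rr)%R := Rr_ge3 r_gt2.
have D_ge1 : (1 <= D)%R by have := INR_leq d_gt0; rewrite /D /=; lra.
split=> [r_large | _]; last by split; [apply: RCRtd_lower_R | apply: upper].
split.
  have -> : (2 ^ (n - 2) * Rr ^ 2 * (2 * D + 5) * (1 - 20 * lg ^ 2 / (2 * N + 5 * Rr))
      = 2 ^ (n - 2) * (2 * N * Rr + 5 * Rr ^ 2) - 20 * 2 ^ (n - 2) * Rr * lg ^ 2)%R.
    by rewrite N_eq; field; nra.
  exact: RCRtd_lower_log_R.
have -> : (2 ^ (n - 2) * Rr ^ 2 * (2 * D + 5) * (1 - 8 * (Rr - 1) / (2 * N * Rr + 5 * Rr ^ 2))
    = 2 ^ (n - 2) * (2 * N * Rr + 5 * Rr ^ 2 - 8 * Rr + 8))%R.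
  by rewrite N_eq; field; nra.
exact: upper.
Qed.
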